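(* Let $k,k_1,\dots,k_N\in\mathbb{R}^3$, $t,t_1,\dots,t_N\in\mathbb{R}$, $\varepsilon_1,\dots,\varepsilon_N\in\{0,1\}$, and write $a^{0}_\lambda=a_\lambda$, $a^{1}_\lambda=a^{\dagger}_\lambda$. Let $m_1<\dots<m_J$ be the positions $m$ with $\varepsilon_m=0$ (annihilators) and $m'_1<\dots<m'_I$ the positions with $\varepsilon_m=1$ (creators), $I+J=N$. Then $$ a_\lambda(t,k)\,a^{\varepsilon_1}_\lambda(t_1,k_1)\cdots a^{\varepsilon_N}_\lambda(t_N,k_N) -\prod_{i=1}^{J} q_{\lambda}^{-1}(t-t_{m_i},k\cdot k_{m_i})\prod_{j=1}^{I} q_{\lambda}(t-t_{m'_j},k\cdot k_{m'_j})\, a^{\varepsilon_1}_\lambda(t_1,k_1)\cdots a^{\varepsilon_N}_\lambda(t_N,k_N)\,a_\lambda(t,k) $$ $$ =\sum_{j=1}^{I}\delta(k-k_{m'_j})\,\frac{1}{\lambda^2}\,q_{\lambda}\big(t-t_{m'_j},\tilde\omega(k)+k\cdot p\big)\prod_{m_i<m'_j}q_{\lambda}(t-t_{m'_j},k\cdot k_{m_i})\prod_{m'_i<m'_j}q^{-1}_{\lambda}(t-t_{m'_j},k\cdot k_{m'_i}) $$ $$ \times\prod_{m_i<m'_j}q_{\lambda}^{-1}(t-t_{m_i},k\cdot k_{m_i})\prod_{m'_i<m'_j}q_{\lambda}(t-t_{m'_i},k\cdot k_{m'_i})\; a^{\varepsilon_1}_\lambda(t_1,k_1)\cdots\widehat{a^{\dagger}_\lambda(t_{m'_j},k_{m'_j})}\cdots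 a^{\varepsilon_N}_\lambda(t_N,k_N), $$ where the hat means that the factor $a^{\dagger}_\lambda(t_{m'_j},k_{m'_j})$ is omitted from the product, and the operator-valued factors depending on $p$ stand to the left of the product of field operators.
   Context: A single non-relativistic particle in $\mathbb{R}^3$ has position $q=(q_1,q_2,q_3)$ and momentum $p=(p_1,p_2,p_3)$ with $[q_j,p_n]=i\delta_{jn}$. A boson field is given by operators $a_j(k),a_j^\dagger(k)$, $j=1,2,3$, $k\in\mathbb{R}^3$, with $[a_j(k),a_n^\dagger(k')]=\delta_{jn}\delta(k-k')$, $[a_j(k),a_n(k')]=0$. Let $\omega(k)=|k|$, $\tilde\omega(k)=\omega(k)+\tfrac12 k^2$, $H_0=\int\omega(k)a^\dagger(k)a(k)\,d^3k+\tfrac12 p^2$, and $kq=\sum_j k_jq_j$, $k\cdot p=\sum_j k_jp_j$. For $\lambda>0$ define the rescaled (collective) field operators $$a_{\lambda}(t,k)=\frac{1}{\lambda}e^{i\frac{t}{\lambda^2}H_0}e^{-ikq}a(k)e^{-i\frac{t}{\lambda^2}H_0}=\frac{1}{\lambda}e^{-i\frac{t}{\lambda^2}(\tilde\omega(k)+k\cdot p)}e^{-ikq}a(k),$$ and $a^\dagger_\lambda(t,k)$ its adjoint, and $q_\lambda(t,x)=e^{-i\frac{t}{\lambda^2}x}$ (where $x$ may be a function of the operator $p$). Polarization indices are suppressed: each field operator carries an index $j\in\{1,2,3\}$ and each $\delta(k-k')$ pairing an annihilator with index $j$ and a creator with index $n$ stands for $\delta(k-k')\delta_{jn}$. *)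

From HB Require Import structures.
From mathcomp Require Import all_boot all_order all_algebra.
From mathcomp Require Import complex.
From mathcomp Require Import reals trigo.
Set Implicit Arguments. Unset Strict Implicit. Unset Printing Implicit Defensive.
Import Order.TTheory GRing.Theory Num.Theory.
Local Open Scope ring_scope.

Definition vec (R : realType) := 'rV[R]_3.

Definition dotv (R : realType) (k k' : vec R) : R := \sum_(i < 3) k 0 i * k' 0 i.

Definition omega (R : realType) (k : vec R) : R := Num.sqrt (dotv k k).
Definition omt (R : realType) (k : vec R) : R := omega k + dotv k k / 2.

Definition cR (R : realType) (x : R) : R[i] := Complex x 0.
Definition expi (R : realType) (th : R) : R[i] := Complex (cos th) (sin th).

Definition ql (R : realType) (lam t x : R) : R[i] := expi (- (t / lam ^+ 2 * x)).
Definition qlinv (R : realType) (lam t x : R) : R[i] := expi (t / lam ^+ 2 * x).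

(* Algebraic model of the particle + boson field operator algebra.
   A is a complex (associative, unital) algebra;
   Q k   stands for  e^{-ikq},
   F f   stands for  f(p)  (functional calculus of the momentum p),
   a j k, ad j k stand for a_j(k), a_j^dagger(k),
   D k k' stands for the (scalar) distribution delta(k-k'). *)
Record ccr_model (R : realType) (A : algType R[i])
    (Q : vec R -> A) (F : (vec R -> R[i]) -> A)
    (a ad : 'I_3 -> vec R -> A) (D : vec R -> vec R -> A) : Prop := CCRModel {
  Q0 : Q 0 = 1;
  QD : forall k k', Q (k + k') = Q k * Q k';
  Fcst : forall c : R[i], F (fun _ => c) = c%:A;
  FM : forall f g, F (fun p => f p * g p) = F f * F g;
  (* e^{-ikq} f(p) = f(p + k) e^{-ikq}   (from [q_j, p_n] = i delta_jn) *)
  QF : forall k f, Q k * F f = F (fun p => f (p + k)) * Q k;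
  aQ : forall j k k', a j k * Q k' = Q k' * a j k;
  adQ : forall j k k', ad j k * Q k' = Q k' * ad j k;
  aF : forall j k f, a j k * F f = F f * a j k;
  adF : forall j k f, ad j k * F f = F f * ad j k;
  aa : forall j n k k', a j k * a n k' = a n k' * a j k;
  adad : forall j n k k', ad j k * ad n k' = ad n k' * ad j k;
  aad : forall j n k k',
      a j k * ad n k' - ad n k' * a j k = (j == n)%:R * D k k';
  Dcentral : forall k k' x, D k k' * x = x * D k k';
  Dsupp : forall k k', k <> k' -> D k k' = 0
}.

Section Fields.
Variables (R : realType) (A : algType R[i]) (Q : vec R -> A)
  (F : (vec R -> R[i]) -> A) (a ad : 'I_3 -> vec R -> A).

Definition alam (lam t : R) (k : vec R) (j : 'I_3) : A :=
  (cR lam^-1)%:A * F (fun p => ql lam t (omt k + dotv k p)) * Q k * a j k.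

Definition adlam (lam t : R) (k : vec R) (j : 'I_3) : A :=
  (cR lam^-1)%:A * ad j k * Q (- k) * F (fun p => qlinv lam t (omt k + dotv k p)).

Definition aeps (e : bool) (lam t : R) (k : vec R) (j : 'I_3) : A :=
  if e then adlam lam t k j else alam lam t k j.
End Fields.

From HB Require Import structures.
From mathcomp Require Import all_boot all_order all_algebra.
From mathcomp Require Import complex.
From mathcomp Require Import boolp reals trigo.
From mathcomp Require Import ring.
Import Order.TTheory GRing.Theory Num.Theory.
Set Implicit Arguments. Unset Strict Implicit. Unset Printing Implicit Defensive.
Local Open Scope ring_scope.

(* Each factor a^e_lam(t_m, k_m) commutes with a_lam(t, k) up to a phase, except that a creator
   also leaves a contraction delta(k - k_m) times a function of p.  Pushing a_lam(t, k) through the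
   product from left to right thus produces the product of all these phases, plus one term per
   creator in which that creator is replaced by its contraction.  Moving the function of p of the
   contraction back to the left across the earlier factors shifts p by their momenta, which yields
   the remaining phases. *)

Section OrderedProducts.
Variable S : comNzRingType.

Lemma prodM_if_cond (I : finType) (P e : pred I) (u v : I -> S) :
  (\prod_(i | ~~ e i && P i) u i) * (\prod_(i | e i && P i) v i)
  = \prod_(i | P i) (if e i then v i else u i).
Proof.
rewrite !big_mkcondl -big_split; apply: eq_bigr => i _.
by case: (e i); rewrite /= ?mulr1 ?mul1r.
Qed.

Lemma prodM_if (I : finType) (e : pred I) (u v : I -> S) :
  (\prod_(i | ~~ e i) u i) * (\prod_(i | e i) v i) = \prod_i (if e i then v i else u i).
Proof.
rewrite [\prod_(i | ~~ e i) _]big_mkcond [\prod_(i | e i) _]big_mkcond -big_split.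
apply: eq_bigr => i _; by case: (e i); rewrite /= ?mulr1 ?mul1r.
Qed.

Lemma twisted_leibniz (A : algType S) (a : A) (N : nat)
    (X C : 'I_N -> A) (phi : 'I_N -> S) (s : 'I_N -> 'I_N -> S) :
  (forall m, a * X m = phi m *: (X m * a) + C m) ->
  (forall m m0, X m * C m0 = s m m0 *: (C m0 * X m)) ->
  a * \prod_(m < N) X m
  = (\prod_(m < N) phi m) *: (\prod_(m < N) X m * a)
    + \sum_(m0 < N) (\prod_(m < N | (m < m0)%N) (phi m * s m m0))
                    *: (C m0 * \prod_(m < N | m != m0) X m).
Proof.
elim: N X C phi s => [|N IH] X C phi s aX XC.
  by rewrite !big_ord0 mulr1 mul1r scale1r addr0.
have IH' := IH (fun m => X (lift ord0 m)) (fun m => C (lift ord0 m))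
  (fun m => phi (lift ord0 m)) (fun m m0 => s (lift ord0 m) (lift ord0 m0))
  (fun m => aX _) (fun m m0 => XC _ _).
rewrite !big_ord_recl mulrA aX mulrDl -scalerAl.
rewrite -[X ord0 * a * _]mulrA IH' mulrDr scalerDr.
rewrite -[X ord0 * (_ *: _)]scalerAr scalerA mulrA -addrA; congr (_ + _).
rewrite [\prod_(m < _ | (m < ord0)%N) _]big_pred0 // scale1r.
have -> : \prod_(m < N.+1 | m != ord0) X m = \prod_(m < N) X (lift ord0 m).
  by rewrite big_mkcond big_ord_recl /= mul1r.
rewrite addrC; congr (_ + _).
rewrite mulr_sumr scaler_sumr; apply: eq_bigr => m0 _ /=.
rewrite [\prod_(m < N.+1 | (m < _)%N) _]big_mkcond big_ord_recl /= -big_mkcond /=.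
rewrite [\prod_(m < N.+1 | m != _) _]big_mkcond big_ord_recl /= -big_mkcond /=.
rewrite -scalerAr scalerA [X ord0 * (C _ * _)]mulrA XC -scalerAl scalerA.
rewrite -[_ * X ord0 * _]mulrA.
by congr (_ *: _); rewrite mulrAC.
Qed.

End OrderedProducts.

Section Phases.
Variable R : realType.

Lemma expiD (x y : R) : expi x * expi y = expi (x + y).
Proof. by rewrite /expi cosD sinD /=; congr Complex; ring. Qed.

Lemma dotvD (k p p' : vec R) : dotv k (p + p') = dotv k p + dotv k p'.
Proof. by rewrite /dotv -big_split; apply: eq_bigr => i _; rewrite mxE mulrDr. Qed.

Lemma dotvN (k p : vec R) : dotv k (- p) = - dotv k p.
Proof. by rewrite /dotv -sumrN; apply: eq_bigr => i _; rewrite mxE mulrN. Qed.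

Lemma dotvC (k p : vec R) : dotv k p = dotv p k.
Proof. by apply: eq_bigr => i _; rewrite mulrC. Qed.

Lemma cRV2 (lam : R) : cR lam^-1 * cR lam^-1 = cR (lam ^+ 2)^-1.
Proof. by rewrite /cR -exprVn expr2; congr Complex; ring. Qed.

Lemma qlN (lam t x : R) : ql lam t (- x) = qlinv lam t x.
Proof. by rewrite /ql /qlinv mulrN opprK. Qed.

Definition phase (lam t : R) (k : vec R) (p : vec R) : R[i] :=
  ql lam t (omt k + dotv k p).
Definition phase_inv (lam t : R) (k : vec R) (p : vec R) : R[i] :=
  qlinv lam t (omt k + dotv k p).

Lemma phaseD lam t k p x : phase lam t k (p + x) = ql lam t (dotv k x) * phase lam t k p.
Proof. by rewrite /phase /ql dotvD expiD; congr expi; ring. Qed.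

Lemma phase_invD lam t k p x :
  phase_inv lam t k (p + x) = qlinv lam t (dotv k x) * phase_inv lam t k p.
Proof. by rewrite /phase_inv /qlinv dotvD expiD; congr expi; ring. Qed.

End Phases.

Section CCR.
Variables (R : realType) (A : algType R[i]) (Q : vec R -> A)
  (F : (vec R -> R[i]) -> A) (a ad : 'I_3 -> vec R -> A) (D : vec R -> vec R -> A).
Hypothesis HA : ccr_model Q F a ad D.

Lemma F_scale c f : F (fun p => c * f p) = c%:A * F f.
Proof. by rewrite (FM HA (fun _ => c)) (Fcst HA). Qed.

Lemma F_comm f g : F f * F g = F g * F f.
Proof. by rewrite -!(FM HA); congr F; apply/funext => p; rewrite mulrC. Qed.

Lemma alamE lam t k j :
  alam Q F a lam t k j = cR lam^-1 *: (F (phase lam t k) * Q k * a j k).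
Proof. by rewrite /alam -!mulrA mulr_algl. Qed.

Lemma adlamE lam t k j :
  adlam Q F ad lam t k j = cR lam^-1 *: (ad j k * Q (- k) * F (phase_inv lam t k)).
Proof. by rewrite /adlam -!mulrA mulr_algl. Qed.

Lemma alam_F lam t k j f :
  alam Q F a lam t k j * F f = F (fun p => f (p + k)) * alam Q F a lam t k j.
Proof.
rewrite alamE -scalerAl -scalerAr; congr (_ *: _).
rewrite -[_ * a j k * F f]mulrA (aF HA) mulrA -[F _ * Q k * F f]mulrA (QF HA).
by rewrite mulrA (F_comm (phase _ _ _)) !mulrA.
Qed.

Lemma adlam_F lam t k j f :
  adlam Q F ad lam t k j * F f = F (fun p => f (p - k)) * adlam Q F ad lam t k j.
Proof.
rewrite adlamE -scalerAl -scalerAr; congr (_ *: _).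
rewrite -[_ * F f]mulrA F_comm mulrA -[_ * Q (- k) * F f]mulrA (QF HA).
by rewrite mulrA [ad j k * F _](adF HA) !mulrA.
Qed.

Lemma alam_alamE lam t s k k' j n :
  alam Q F a lam t k j * alam Q F a lam s k' n
  = cR (lam ^+ 2)^-1 *: (F (fun p => phase lam t k p * phase lam s k' (p + k))
                         * Q (k + k') * (a j k * a n k')).
Proof.
rewrite [alam _ _ _ _ s _ _]alamE -scalerAr !mulrA alam_F alamE.
rewrite -scalerAr -!scalerAl scalerA cRV2 !mulrA; congr (_ *: (_ * _)).
rewrite -[_ * a j k * Q k']mulrA (aQ HA) mulrA -[_ * Q k * Q k']mulrA -(QD HA).
by rewrite F_comm -(FM HA).
Qed.

Lemma alam_alam lam t s k k' j n :
  alam Q F a lam t k j * alam Q F a lam s k' n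
  = qlinv lam (t - s) (dotv k k') *: (alam Q F a lam s k' n * alam Q F a lam t k j).
Proof.
have phases p : phase lam t k p * phase lam s k' (p + k)
    = qlinv lam (t - s) (dotv k k') * (phase lam s k' p * phase lam t k (p + k')).
  rewrite !phaseD /phase /ql /qlinv !expiD; congr expi.
  by rewrite (dotvC k'); ring.
rewrite !alam_alamE (funext phases) F_scale (aa HA j) (addrC k').
by rewrite mulr_algl -!scalerAl !scalerA mulrC.
Qed.

Lemma adlam_alamE lam t s k k' j n :
  adlam Q F ad lam s k' n * alam Q F a lam t k j
  = cR (lam ^+ 2)^-1 *: (F (fun p => phase_inv lam s k' (p - k') * phase lam t k (p - k'))
                         * Q (k - k') * (ad n k' * a j k)).
Proof.
rewrite adlamE alamE -scalerAl -scalerAr scalerA cRV2 !mulrA; congr (_ *: (_ * _)).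
rewrite -[_ * F _ * F (phase _ _ _)]mulrA -(FM HA) -[_ * Q (- k') * F _]mulrA (QF HA).
rewrite mulrA (adF HA) -[_ * Q (- k') * Q k]mulrA -(QD HA) -[_ * ad n k' * Q _]mulrA.
by rewrite (adQ HA) mulrA addrC.
Qed.

Definition contraction (e : bool) (lam t s : R) (k k' : vec R) (j n : 'I_3) : A :=
  if e then D k k' * (j == n)%:R * (cR (lam ^+ 2)^-1)%:A * F (phase lam (t - s) k)
  else 0.

Lemma alam_adlam lam t s k k' j n :
  alam Q F a lam t k j * adlam Q F ad lam s k' n
  = ql lam (t - s) (dotv k k') *: (adlam Q F ad lam s k' n * alam Q F a lam t k j)
    + contraction true lam t s k k' j n.
Proof.
have ccr : a j k * ad n k' = ad n k' * a j k + (j == n)%:R * D k k'.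
  by rewrite -(aad HA) addrC subrK.
have adaQ x : ad n k' * a j k * Q x = Q x * (ad n k' * a j k).
  by rewrite -mulrA (aQ HA) !mulrA (adQ HA).
have adaF f : ad n k' * a j k * F f = F f * (ad n k' * a j k).
  by rewrite -mulrA (aF HA) !mulrA (adF HA).
have phases p : phase lam t k p * phase_inv lam s k' (p + (k - k'))
    = ql lam (t - s) (dotv k k') * (phase_inv lam s k' (p - k') * phase lam t k (p - k')).
  rewrite !phase_invD phaseD /phase /phase_inv /ql /qlinv !expiD; congr expi.
  by rewrite !dotvD !dotvN (dotvC k'); ring.
rewrite adlam_alamE alamE adlamE -scalerAl -scalerAr [in LHS]scalerA cRV2 !mulrA.
rewrite -[_ * a j k * ad n k']mulrA ccr mulrDr !mulrDl scalerDr; congr (_ + _).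
  rewrite -[_ * (ad n k' * a j k) * Q _]mulrA adaQ mulrA.
  rewrite -[_ * (ad n k' * a j k) * F _]mulrA adaF mulrA.
  rewrite -[_ * Q k * Q _]mulrA -(QD HA) -[_ * Q _ * F _]mulrA (QF HA).
  rewrite [F _ * (F _ * _)]mulrA -(FM HA).
  by rewrite (funext phases) F_scale mulr_algl -!scalerAl !scalerA mulrC !mulrA.
rewrite /contraction; case: (eqVneq k k') => [<-|/eqP/(Dsupp HA) ->]; last first.
  by rewrite !(mulr0, mul0r, scaler0).
case: (j == n); last by rewrite !(mulr0n, mulr0, mul0r, scaler0).
rewrite mulr1n mul1r mulr1 -(Dcentral HA) -!mulrA [Q k * _]mulrA -(QD HA) subrr (Q0 HA).
rewrite mul1r -(FM HA) mulr_algl -scalerAr; congr (_ *: (_ * F _)).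
apply/funext => p; rewrite /phase /phase_inv /ql /qlinv expiD; congr expi; ring.
Qed.

Lemma alam_aeps lam t s k k' j n e :
  alam Q F a lam t k j * aeps Q F a ad e lam s k' n
  = (if e then ql lam (t - s) (dotv k k') else qlinv lam (t - s) (dotv k k'))
      *: (aeps Q F a ad e lam s k' n * alam Q F a lam t k j)
    + contraction e lam t s k k' j n.
Proof. by case: e; rewrite /aeps ?alam_adlam // alam_alam addr0. Qed.

Lemma aeps_phase lam u s k k' n e :
  aeps Q F a ad e lam s k' n * F (phase lam u k)
  = (if e then qlinv lam u (dotv k k') else ql lam u (dotv k k'))
      *: (F (phase lam u k) * aeps Q F a ad e lam s k' n).
Proof.
rewrite -mulr_algl mulrA -F_scale.
case: e; rewrite /aeps ?adlam_F ?alam_F; congr (F _ * _); apply/funext => p.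
  by rewrite phaseD dotvN qlN.
by rewrite phaseD.
Qed.

Lemma aeps_contraction lam t s s' k k' k'' j n n' e e' :
  aeps Q F a ad e' lam s' k'' n' * contraction e lam t s k k' j n
  = (if e' then qlinv lam (t - s) (dotv k k'') else ql lam (t - s) (dotv k k''))
      *: (contraction e lam t s k k' j n * aeps Q F a ad e' lam s' k'' n').
Proof.
rewrite /contraction; case: e; last by rewrite mulr0 mul0r scaler0.
set X := aeps _ _ _ _ _ _ _ _ _.
have comm_X : GRing.comm X (D k k' * (j == n)%:R * (cR (lam ^+ 2)^-1)%:A).
  apply: commrM; last exact/commr_sym/comm_alg.
  by apply: commrM; [exact/commr_sym/(Dcentral HA) | exact: commr_nat].
by rewrite mulrA comm_X -mulrA aeps_phase -scalerAr mulrA.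
Qed.

End CCR.

Theorem lemma2 (R : realType) (A : algType R[i]) (Q : vec R -> A)
  (F : (vec R -> R[i]) -> A) (a ad : 'I_3 -> vec R -> A)
  (D : vec R -> vec R -> A) (HA : ccr_model Q F a ad D)
  (lam : R) (Hlam : 0 < lam) (N : nat)
  (eps : 'I_N -> bool) (ts : 'I_N -> R) (ks : 'I_N -> vec R) (js : 'I_N -> 'I_3)
  (t : R) (k : vec R) (j : 'I_3) :
  alam Q F a lam t k j
    * (\prod_(m < N) aeps Q F a ad (eps m) lam (ts m) (ks m) (js m))
  - ((\prod_(m < N | ~~ eps m) qlinv lam (t - ts m) (dotv k (ks m)))
     * (\prod_(m < N | eps m) ql lam (t - ts m) (dotv k (ks m))))%:A
    * (\prod_(m < N) aeps Q F a ad (eps m) lam (ts m) (ks m) (js m))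
    * alam Q F a lam t k j
  = \sum_(m0 < N | eps m0)
      D k (ks m0) * (j == js m0)%:R * (cR (lam ^+ 2)^-1)%:A
      * F (fun p => ql lam (t - ts m0) (omt k + dotv k p))
      * ((\prod_(m < N | ~~ eps m && (m < m0)%N) ql lam (t - ts m0) (dotv k (ks m)))
         * (\prod_(m < N | eps m && (m < m0)%N) qlinv lam (t - ts m0) (dotv k (ks m)))
         * (\prod_(m < N | ~~ eps m && (m < m0)%N) qlinv lam (t - ts m) (dotv k (ks m)))
         * (\prod_(m < N | eps m && (m < m0)%N) ql lam (t - ts m) (dotv k (ks m))))%:A
      * (\prod_(m < N | m != m0) aeps Q F a ad (eps m) lam (ts m) (ks m) (js m)).
Proof.
(* [s m m0] is the phase picked up by the function of p in the m0-th contraction when it is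
   moved left across the m-th factor. *)
pose phi m := if eps m then ql lam (t - ts m) (dotv k (ks m))
              else qlinv lam (t - ts m) (dotv k (ks m)).
pose s m m0 := if eps m then qlinv lam (t - ts m0) (dotv k (ks m))
               else ql lam (t - ts m0) (dotv k (ks m)).
pose C m0 := contraction F D (eps m0) lam t (ts m0) k (ks m0) j (js m0).
rewrite (twisted_leibniz (phi := phi) (C := C) (s := s)); first last.
- by move=> m m0; apply: aeps_contraction.
- by move=> m; apply: alam_aeps.
rewrite prodM_if mulr_algl -scalerAl addrAC subrr add0r [in RHS]big_mkcond.
apply: eq_bigr => m0 _; rewrite /C /contraction; case: (eps m0); last first.
  by rewrite mul0r scaler0.
rewrite [_ * F _ * _%:A]mulr_algr -scalerAl; congr (_ *: _).
rewrite -[in RHS]mulrA !prodM_if_cond -big_split.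
by apply: eq_bigr => m _; rewrite mulrC.
Qed.
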